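(* Let $n\geq 3$. If a probability distribution $p=(p(v))_{v\in\{0,1\}^n}\in\Delta_{2^n-1}$ lies in the RBM model $M^1_n$, then every flattening of the table $(p(v))_{v\in\{0,1\}^n}$ has rank at most $2$, and $$\sigma_{ij}\,\sigma_{ik}\,\sigma_{jk}\geq 0\qquad\text{for all distinct } i,j,k\in\{1,\dots,n\}.$$
   Context: The RBM model $M^1_n$ is the subset of the open simplex $\Delta_{2^n-1}$ consisting of all vectors $(p(v))_{v\in\{0,1\}^n}$ with $p(v)=\frac1Z\beta_1^{v_1}\cdots\beta_n^{v_n}(1+\gamma\,\omega_1^{v_1}\cdots\omega_n^{v_n})$, all parameters in $\mathbb{R}_{>0}$, $Z$ the normalizing constant. For a partition $\{1,\dots,n\}=A\cup B$ into two nonempty sets, the flattening of the $2\times\cdots\times2$ table $(p(v))$ is the $2^{|A|}\times 2^{|B|}$ matrix with rows indexed by $\{0,1\}^A$, columns by $\{0,1\}^B$, whose entry in row $v_A$, column $v_B$ is $p(v)$ for the $v$ with restrictions $v_A,v_B$. For $i\neq j$, $\sigma_{ij}$ is the covariance of the binary random variables $X_i,X_j$ (the $i$-th and $j$-th coordinates of a random vector with distribution $p$), i.e. the determinant of the $2\times2$ marginal table $\bigl(\mathrm{Prob}(X_i=a,X_j=b)\bigr)_{a,b\in\{0,1\}}$. *)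

From HB Require Import structures.
From mathcomp Require Import all_boot all_order all_algebra.
From mathcomp Require Import reals.
Set Implicit Arguments. Unset Strict Implicit. Unset Printing Implicit Defensive.
Import Order.TTheory GRing.Theory Num.Theory.
Local Open Scope ring_scope.

(* States v in {0,1}^n, coordinates indexed by 'I_n (coordinate i+1 of the paper is i). *)
Definition state (n : nat) := {ffun 'I_n -> bool}.

Definition bpow (R : realType) (x : R) (b : bool) : R := if b then x else 1.

Definition rbm_weight (R : realType) (n : nat) (beta : 'I_n -> R) (gamma : R)
  (omega : 'I_n -> R) (v : state n) : R :=
  (\prod_i bpow (beta i) (v i)) * (1 + gamma * \prod_i bpow (omega i) (v i)).

Definition rbm_Z (R : realType) (n : nat) beta gamma omega : R :=
  \sum_(v : state n) rbm_weight (R := R) beta gamma omega v.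

Definition rbm_dist (R : realType) (n : nat) beta gamma omega (v : state n) : R :=
  rbm_weight beta gamma omega v / rbm_Z beta gamma omega.

Definition in_open_simplex (R : realType) (n : nat) (p : state n -> R) : Prop :=
  (forall v, 0 < p v) /\ \sum_v p v = 1.

Definition in_RBM (R : realType) (n : nat) (p : state n -> R) : Prop :=
  in_open_simplex p /\
  exists (beta : 'I_n -> R) (gamma : R) (omega : 'I_n -> R),
    (forall i, 0 < beta i) /\ 0 < gamma /\ (forall i, 0 < omega i) /\
    forall v, p v = rbm_dist beta gamma omega v.

Definition coords (n : nat) (A : {set 'I_n}) := {k : 'I_n | k \in A}.

Definition glue (n : nat) (A : {set 'I_n})
  (vA : {ffun coords A -> bool}) (vB : {ffun coords (~: A) -> bool}) : state n :=
  [ffun k => match insub k : option (coords A) with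
             | Some a => vA a
             | None => match insub k : option (coords (~: A)) with
                       | Some b => vB b
                       | None => false
                       end
             end].

Definition flattening (R : realType) (n : nat) (p : state n -> R) (A : {set 'I_n}) :
  'M[R]_(#|{: {ffun coords A -> bool}}|, #|{: {ffun coords (~: A) -> bool}}|) :=
  \matrix_(r, c) p (glue (enum_val r) (enum_val c)).

Definition marg2 (R : realType) (n : nat) (p : state n -> R) (i j : 'I_n) (a b : bool) : R :=
  \sum_(v : state n | (v i == a) && (v j == b)) p v.

(* covariance sigma_ij = determinant of the 2x2 marginal table *)
Definition sigma (R : realType) (n : nat) (p : state n -> R) (i j : 'I_n) : R :=
  marg2 p i j false false * marg2 p i j true true
  - marg2 p i j false true * marg2 p i j true false.

(* Up to the factor 1/Z, the RBM weight is beta^v + gamma (beta omega)^v, a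
   positive combination of two product tensors.  A product tensor flattens to
   a rank-one matrix, so every flattening has rank at most 2.  The 2x2
   marginal at (i, j) of a product tensor g is the outer product of
   (g_i(0), g_i(1)) and (g_j(0), g_j(1)) times a nonnegative mass, so sigma_ij
   of a positive combination of two product tensors g, h is a nonnegative
   factor times the 2x2 minors of (g_i, h_i) and of (g_j, h_j).  In
   sigma_ij sigma_ik sigma_jk each of the three minors occurs twice. *)
From HB Require Import structures.
From mathcomp Require Import all_boot all_order all_algebra.
From mathcomp Require Import reals ring.
Set Implicit Arguments. Unset Strict Implicit. Unset Printing Implicit Defensive.
Import Order.TTheory GRing.Theory Num.Theory.
Local Open Scope ring_scope.

Section ProductTensors.
Variables (R : realType) (n : nat).
Implicit Types (g h : 'I_n -> bool -> R) (p q : state n -> R) (a b : R).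

Definition prodf g (v : state n) : R := \prod_k g k (v k).

Definition mix2 a b g h (v : state n) : R := a * prodf g v + b * prodf h v.

Lemma eq_flattening p q A : p =1 q -> flattening p A = flattening q A.
Proof. by move=> epq; apply/matrixP => r c; rewrite !mxE epq. Qed.

Lemma eq_sigma p q i j : p =1 q -> sigma p i j = sigma q i j.
Proof.
move=> epq; have em x y : marg2 p i j x y = marg2 q i j x y.
  by apply: eq_bigr => v _; rewrite epq.
by rewrite /sigma !em.
Qed.

Lemma glue_in (A : {set 'I_n}) vA vB vB' k : k \in A ->
  glue (A := A) vA vB k = glue vA vB' k.
Proof. by move=> kA; rewrite /glue !ffunE; case: insubP => [//|]; rewrite kA. Qed.

Lemma glue_notin (A : {set 'I_n}) vA vA' vB k : k \notin A ->
  glue (A := A) vA vB k = glue vA' vB k.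
Proof.
by move=> kA; rewrite /glue !ffunE; case: insubP => [a Ha _|//]; rewrite Ha in kA.
Qed.

Lemma prodf_glue g (A : {set 'I_n}) vA vB :
  prodf g (glue (A := A) vA vB) =
  (\prod_(k in A) g k (glue vA [ffun => false] k)) *
  (\prod_(k | k \notin A) g k (glue [ffun => false] vB k)).
Proof.
rewrite /prodf (bigID (fun k => k \in A)) /=; congr (_ * _); apply: eq_bigr => k kA.
  by rewrite (glue_in vA vB [ffun => false]).
by rewrite (glue_notin vA [ffun => false]).
Qed.

Lemma rank_flattening_prodf g A : (\rank (flattening (prodf g) A) <= 1)%N.
Proof.
pose u : 'cV[R]_#|{: {ffun coords A -> bool}}| :=
  \col_r \prod_(k in A) g k (glue (enum_val r) [ffun => false] k).
pose w : 'rV[R]_#|{: {ffun coords (~: A) -> bool}}| :=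
  \row_c \prod_(k | k \notin A) g k (glue [ffun => false] (enum_val c) k).
suff -> : flattening (prodf g) A = u *m w by exact: mulmx_max_rank.
apply/matrixP => r c.
by rewrite !mxE big_ord1 !mxE prodf_glue.
Qed.

Lemma flattening_mix2 a b g h A :
  flattening (mix2 a b g h) A = a *: flattening (prodf g) A + b *: flattening (prodf h) A.
Proof. by apply/matrixP => r c; rewrite !mxE. Qed.

Lemma rank_flattening_mix2 a b g h A : (\rank (flattening (mix2 a b g h) A) <= 2)%N.
Proof.
rewrite flattening_mix2; apply: leq_trans (mxrank_add _ _) _.
have rank_scale_le1 c f : (\rank (c *: flattening (prodf f) A) <= 1)%N.
  exact: leq_trans (mxrank_scale _ _) (rank_flattening_prodf _ _).
exact: leq_add (rank_scale_le1 _ _) (rank_scale_le1 _ _).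
Qed.

Definition marg_rest g (i j : 'I_n) : R :=
  \sum_(v : state n | (v i == false) && (v j == false))
     \prod_(k | (k != i) && (k != j)) g k (v k).

Definition flip2 (i j : 'I_n) (x y : bool) (v : state n) : state n :=
  [ffun k => if k == i then v k (+) x else if k == j then v k (+) y else v k].

Lemma flip2K i j x y : involutive (flip2 i j x y).
Proof.
move=> v; apply/ffunP => k; rewrite !ffunE.
by case: (k == i); case: (k == j); rewrite ?addbK.
Qed.

(* Flipping the bits at i and j matches the fibre {v_i = x, v_j = y} with
   {v_i = v_j = false} without touching the other coordinates. *)
Lemma marg2_prodf g i j x y : i != j ->
  marg2 (prodf g) i j x y = g i x * g j y * marg_rest g i j.
Proof.
move=> ij; have ji : j != i by rewrite eq_sym.
rewrite /marg2 (eq_bigr (fun v : state n =>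
  g i x * g j y * \prod_(k | (k != i) && (k != j)) g k (v k))); last first.
  by move=> v /andP[/eqP vi /eqP vj]; rewrite /prodf (bigD1 i) // (bigD1 j) //= vi vj mulrA.
rewrite -mulr_sumr (reindex_inj (inv_inj (flip2K i j x y))); congr (_ * _).
apply: eq_big => [v|v _].
  by rewrite !ffunE eqxx (negbTE ji) eqxx; case: (v i); case: (v j); case: x; case: y.
by apply: eq_bigr => k /andP[ki kj]; rewrite ffunE (negbTE ki) (negbTE kj).
Qed.

Lemma marg_rest_ge0 g i j : (forall k x, 0 <= g k x) -> 0 <= marg_rest g i j.
Proof. by move=> g_ge0; apply: sumr_ge0 => v _; apply: prodr_ge0. Qed.

Definition minor2 g h (k : 'I_n) : R := g k false * h k true - g k true * h k false.

Lemma sigma_mix2 a b g h i j : i != j ->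
  sigma (mix2 a b g h) i j =
  a * b * marg_rest g i j * marg_rest h i j * minor2 g h i * minor2 g h j.
Proof.
move=> ij.
have marg2_mix2 x y : marg2 (mix2 a b g h) i j x y =
    a * marg2 (prodf g) i j x y + b * marg2 (prodf h) i j x y.
  by rewrite /marg2 !mulr_sumr -big_split.
by rewrite /sigma !marg2_mix2 !marg2_prodf // /minor2; ring.
Qed.

Lemma sigma_mix2_triple_ge0 a b g h i j k :
  0 <= a * b -> (forall l x, 0 <= g l x) -> (forall l x, 0 <= h l x) ->
  i != j -> i != k -> j != k ->
  0 <= sigma (mix2 a b g h) i j * sigma (mix2 a b g h) i k * sigma (mix2 a b g h) j k.
Proof.
move=> ab_ge0 g_ge0 h_ge0 ij ik jk; rewrite !sigma_mix2 //.
have Tg := marg_rest_ge0 _ _ g_ge0; have Th := marg_rest_ge0 _ _ h_ge0.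
set m := minor2 g h.
have -> : forall ti tj tk si sj sk,
    a * b * ti * si * m i * m j * (a * b * tj * sj * m i * m k) * (a * b * tk * sk * m j * m k)
    = (a * b) ^+ 3 * (ti * si * (tj * sj) * (tk * sk)) * (m i * m j * m k) ^+ 2.
  by move=> *; ring.
by rewrite mulr_ge0 ?sqr_ge0 // mulr_ge0 ?exprn_ge0 // !mulr_ge0.
Qed.

End ProductTensors.

Lemma rbm_dist_mix2 (R : realType) (n : nat) beta gamma omega (v : state n) :
  rbm_dist (R := R) beta gamma omega v =
  mix2 (rbm_Z beta gamma omega)^-1 ((rbm_Z beta gamma omega)^-1 * gamma)
    (fun k => bpow (beta k)) (fun k => bpow (beta k * omega k)) v.
Proof.
have prodf_mul : prodf (fun k => bpow (beta k * omega k)) v =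
    prodf (fun k => bpow (beta k)) v * prodf (fun k => bpow (omega k)) v.
  rewrite /prodf -big_split /=; apply: eq_bigr => k _.
  by rewrite /bpow; case: (v k); rewrite ?mulr1.
rewrite /rbm_dist /rbm_weight -/(prodf (fun k => bpow (beta k)) v).
rewrite -/(prodf (fun k => bpow (omega k)) v) /mix2 prodf_mul.
by move: (rbm_Z _ _ _) (prodf _ v) (prodf _ v) => Z Pb Pw; ring.
Qed.

Theorem corollary3p4 (R : realType) (n : nat) (p : state n -> R) :
  (3 <= n)%N -> in_RBM p ->
  (forall A : {set 'I_n}, A != set0 -> ~: A != set0 ->
     (\rank (flattening p A) <= 2)%N) /\
  (forall i j k : 'I_n, i != j -> i != k -> j != k ->
     0 <= sigma p i j * sigma p i k * sigma p j k).
Proof.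
move=> _ [_ [beta [gamma [omega [beta_gt0 [gamma_gt0 [omega_gt0 p_rbm]]]]]]].
have p_mix v := etrans (p_rbm v) (rbm_dist_mix2 beta gamma omega v).
split=> [A _ _|i j k ij ik jk].
  by rewrite (eq_flattening _ p_mix) rank_flattening_mix2.
rewrite !(eq_sigma _ _ p_mix); apply: sigma_mix2_triple_ge0 => //.
- by rewrite mulrA -expr2 mulr_ge0 ?sqr_ge0 ?ltW.
- by move=> l [] /=; rewrite ?ltW.
- by move=> l [] /=; rewrite ?ltW ?mulr_gt0.
Qed.
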